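(* Let $X$ be a space such that $\mathsf{EC}(X,\mathbb{R})$ holds. If $X$ is either normal, or Tychonoff and $\aleph_1$-strongly collectionwise Hausdorff, then $X$ is $\omega_1$-compact.
   Context: All spaces are Hausdorff and maps continuous. For a non-Lindelöf space $X$ and a space $Y$, $\mathsf{EC}(X,Y)$ means: for every continuous $f:X\to Y$ there is a Lindelöf $Z\subset X$ such that $f(X\setminus Z)$ is a singleton (for Lindelöf $X$ the property is regarded as trivially true). A space is $\aleph_1$-strongly collectionwise Hausdorff if every closed discrete subset $\{x_\alpha:\alpha<\lambda\}$ with $\lambda\le\aleph_1$ can be expanded to a discrete collection of open sets $\{U_\alpha\}$ with $x_\alpha\in U_\alpha$. A space is $\omega_1$-compact if every closed discrete subspace is countable. *)

From HB Require Import structures.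
From mathcomp Require Import all_boot all_order all_algebra.
From mathcomp Require Import all_classical all_reals topology normedtype.
From mathcomp Require Import Rstruct Rstruct_topology.
From Stdlib Require Import Rdefinitions.

Set Implicit Arguments.
Unset Strict Implicit.
Unset Printing Implicit Defensive.

Local Open Scope classical_set_scope.

Section Defs.
Context {X : topologicalType}.

Definition lindelof (Z : set X) : Prop :=
  forall F : set (set X), (forall U, F U -> open U) ->
    Z `<=` \bigcup_(U in F) U ->
    exists G : set (set X), [/\ G `<=` F, countable G & Z `<=` \bigcup_(U in G) U].

Definition discrete_subset (D : set X) : Prop :=
  forall x, D x -> exists U : set X, [/\ open U, U x & U `&` D = [set x]].

Definition closed_discrete (D : set X) : Prop := closed D /\ discrete_subset D.

Definition discrete_family (D : set X) (U : X -> set X) : Prop :=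
  forall p : X, exists V : set X, [/\ open V, V p &
    forall a b, D a -> D b -> V `&` U a !=set0 -> V `&` U b !=set0 -> a = b].

Definition card_le_aleph1 (D : set X) : Prop :=
  exists r : X -> X -> Prop,
    [/\ (forall x, D x -> ~ r x x),
        (forall x y z, D x -> D y -> D z -> r x y -> r y z -> r x z),
        (forall x y, D x -> D y -> [\/ r x y, x = y | r y x]),
        (forall A : set X, A `<=` D -> A !=set0 ->
           exists2 m, A m & forall y, A y -> ~ r y m) &
        (forall x, D x -> countable [set y | D y /\ r y x])].

Definition aleph1_strongly_cwH : Prop :=
  forall D : set X, closed_discrete D -> card_le_aleph1 D ->
    exists U : X -> set X,
      [/\ forall a, D a -> open (U a), forall a, D a -> U a a &
          discrete_family D U].

Definition omega1_compact : Prop :=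
  forall D : set X, closed_discrete D -> countable D.

(** Tychonoff (Hausdorff is a standing assumption): completely regular,
    points and closed sets separated by continuous real functions. *)
Definition completely_regular : Prop :=
  forall (a : X) (B : set X), closed B -> ~ B a ->
    exists f : X -> R, [/\ continuous f, f a = 0%R & forall b, B b -> f b = 1%R].

End Defs.

Definition EC (X Y : topologicalType) : Prop :=
  ~ @lindelof X setT ->
  forall f : X -> Y, continuous f ->
    exists Z : set X, lindelof Z /\ exists y : Y, f @` (~` Z) = [set y].

(* If D is an uncountable closed discrete set, split it into disjoint
   uncountable halves A and B and find a continuous f : X -> R equal to 0 on A
   and to 1 on B.  A closed discrete subset of a Lindelöf set is countable, so
   X is not Lindelöf and both halves meet the complement of the Lindelöf set
   outside of which EC(X,R) makes f constant: f would take both values there.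
   In a normal space f is given by Urysohn's lemma.  Otherwise D is first
   shrunk to an uncountable subset of size aleph_1, which the strong
   collectionwise Hausdorff property expands to a discrete family of open sets
   U_a; functions vanishing at a in A and equal to 1 off U_a, given by complete
   regularity, glue to a continuous f because the family is discrete. *)

From mathcomp Require Import all_boot all_classical all_reals topology normedtype.
From mathcomp Require Import Rstruct Rstruct_topology.
From Stdlib Require Import Rdefinitions.

Set Implicit Arguments.
Unset Strict Implicit.
Unset Printing Implicit Defensive.
Local Open Scope classical_set_scope.

Lemma countableU T (A B : set T) :
  countable A -> countable B -> countable (A `|` B).
Proof.
move=> cA cB; have -> : A `|` B = \bigcup_(i in [set: bool]) (if i then A else B).
  apply/seteqP; split=> [x [Ax|Bx]|x [[] _ ?]] //.
  - by exists true.
  - by exists false.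
  - by left.
  - by right.
by apply: bigcup_countable => // -[].
Qed.

Lemma is_subset1_countable T (A : set T) : is_subset1 A -> countable A.
Proof.
move=> A1; have [[a Aa]|/set0P/negP/negbNE/eqP->] := pselect (A !=set0) => //.
by apply: sub_countable (subset_card_le _) (countable1 a) => x Ax; exact: A1.
Qed.

Section halving.
Variables (T : Type) (D : set T).

Definition pair_pts (p : T * T) : set T := [set p.1; p.2].

Definition disjoint_pairs (M : set (T * T)) : Prop :=
  (forall p, M p -> [/\ D p.1, D p.2 & p.1 <> p.2]) /\
  (forall p q, M p -> M q -> pair_pts p `&` pair_pts q !=set0 -> p = q).

Lemma exists_maximal_disjoint_pairs : exists M,
  disjoint_pairs M /\ forall M', M `<` M' -> ~ disjoint_pairs M'.
Proof.
apply: Zorn_bigcup => F FP Ftot; split.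
  by move=> p [M FM]; exact: (FP M FM).1.
move=> p q [M1 FM1 M1p] [M2 FM2 M2q].
have [/(_ p M1p) M2p|/(_ q M2q) M1q] := Ftot _ _ FM1 FM2.
- exact: (FP _ FM2).2.
- exact: (FP _ FM1).2.
Qed.

Lemma maximal_disjoint_pairs_uncovered M :
  disjoint_pairs M -> (forall M', M `<` M' -> ~ disjoint_pairs M') ->
  is_subset1 (D `\` \bigcup_(p in M) pair_pts p).
Proof.
move=> [MD Mdisj] Mmax u v [Du ncu] [Dv ncv]; apply: contrapT => uv.
have fresh p x : M p -> pair_pts p x -> ~ pair_pts (u, v) x.
  move=> Mp px [xu|xv].
  - by apply: ncu; have <- : x = u := xu; exists p.
  - by apply: ncv; have <- : x = v := xv; exists p.
apply: (Mmax (M `|` [set (u, v)])).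
  split=> [p|]; first by left.
  move=> /(_ (u, v) (or_intror erefl)) Muv.
  by apply: ncu; exists (u, v) => //; left.
split=> [p [/MD //|->] //|p q [Mp|->] [Mq|->] [x [px qx]] //].
- exact: Mdisj p q Mp Mq (ex_intro _ x (conj px qx)).
- by case: (fresh p x Mp px).
- by case: (fresh q x Mq qx).
Qed.

(* The two halves are the first and the second coordinates of a maximal
   family of disjoint pairs, which covers D up to one point. *)
Lemma uncountable_halves : ~ countable D ->
  exists A B : set T,
    [/\ A `<=` D, B `<=` D, A `&` B = set0, ~ countable A & ~ countable B].
Proof.
move=> nD; have [M [MP Mmax]] := exists_maximal_disjoint_pairs.
have [MD Mdisj] := MP.
have fst_inj : {in M &, injective fst}.
  move=> p q /set_mem Mp /set_mem Mq pq; apply: Mdisj => //.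
  by exists p.1; split; [left|rewrite pq; left].
have snd_inj : {in M &, injective snd}.
  move=> p q /set_mem Mp /set_mem Mq pq; apply: Mdisj => //.
  by exists p.2; split; [right|rewrite pq; right].
have countable_M : countable (fst @` M) \/ countable (snd @` M) -> countable M.
  by case; [rewrite (eq_countable (inj_card_eq fst_inj))|
    rewrite (eq_countable (inj_card_eq snd_inj))].
have uncountable_M : ~ countable M.
  move=> cM; apply: nD.
  pose covered := \bigcup_(p in M) pair_pts p.
  have cover : D `<=` (fst @` M `|` snd @` M) `|` (D `\` covered).
    move=> x Dx; have [[p Mp [px|px]]|ncx] := pselect (covered x); last by right.
    - by left; left; exists p.
    - by left; right; exists p.
  apply: sub_countable (subset_card_le cover) _; apply: countableU.
    by apply: countableU; apply: sub_countable (card_image_le _ _) cM.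
  exact/is_subset1_countable/(maximal_disjoint_pairs_uncovered MP Mmax).
exists (fst @` M), (snd @` M); split.
- by move=> x [p /MD[Dp _ _] <-].
- by move=> x [p /MD[_ Dp _] <-].
- apply/seteqP; split=> // x [[p Mp <-] [q Mq qp]].
  have pq : p = q by apply: Mdisj => //; exists p.1; split; [left|right].
  by have [_ _ []] := MD p Mp; rewrite -qp pq.
- by move=> cA; apply: uncountable_M; apply: countable_M; left.
- by move=> cB; apply: uncountable_M; apply: countable_M; right.
Qed.

End halving.

Section closed_discrete.
Variable X : topologicalType.
Implicit Types D S Z : set X.

Lemma closed_discrete_sub D S : closed_discrete D -> S `<=` D -> closed_discrete S.
Proof.
move=> [cD dD] SD; have isolated x : D x -> exists U, [/\ open U, U x &
    forall y, U y -> S y -> y = x].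
  move=> Dx; have [U [oU Ux UD]] := dD x Dx; exists U; split=> // y Uy Sy.
  have : (U `&` D) y by split=> //; exact: SD.
  by rewrite UD.
split.
  move=> p Sp; have Dp : D p by apply: cD => B /Sp[q [/SD Dq Bq]]; exists q.
  have [U [oU Up US]] := isolated p Dp.
  have [q [Sq Uq]] := Sp U (open_nbhs_nbhs (conj oU Up)).
  by rewrite -(US q).
move=> x Sx; have [U [oU Ux US]] := isolated x (SD x Sx); exists U; split=> //.
by apply/seteqP; split=> [y [Uy Sy]|y ->] //; exact: US.
Qed.

Lemma lindelof_closed_discrete_countable Z S :
  lindelof Z -> closed_discrete S -> S `<=` Z -> countable S.
Proof.
move=> lZ [cS dS] SZ.
pose F := [set U | open U /\ (U = ~` S \/ exists a, U `&` S = [set a])].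
have [G [GF cG ZG]] :
    exists G, [/\ G `<=` F, countable G & Z `<=` \bigcup_(U in G) U].
  apply: lZ => [U []//|z Zz]; have [Sz|nSz] := pselect (S z).
    by have [U [oU Uz US]] := dS z Sz; exists U => //; split=> //; right; exists z.
  by exists (~` S) => //; split; [exact: closed_openC|left].
have SG : S `<=` \bigcup_(U in G) (U `&` S).
  by move=> x Sx; have [U GU Ux] := ZG x (SZ x Sx); exists U.
apply: sub_countable (subset_card_le SG) _; apply: bigcup_countable => // U GU.
have [_ [->|[a ->]]] := GF U GU; last exact: countable1.
by rewrite setICl.
Qed.

End closed_discrete.

Definition real_separated (X : topologicalType) (A B : set X) : Prop :=
  exists f : X -> R,
    [/\ continuous f, forall a, A a -> f a = 0%R & forall b, B b -> f b = 1%R].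

Lemma EC_uncountable_not_separated (X : topologicalType) (D A B : set X) :
  EC X R -> closed_discrete D -> A `<=` D -> B `<=` D ->
  ~ countable A -> ~ countable B -> ~ real_separated A B.
Proof.
move=> ec cdD AD BD nA nB [f [cf fA fB]].
have outside Z C :
    lindelof Z -> C `<=` D -> ~ countable C -> exists2 c, C c & ~ Z c.
  move=> lZ CD nC; apply: contrapT => CZ; apply: nC.
  apply: (lindelof_closed_discrete_countable lZ (closed_discrete_sub cdD CD)).
  by move=> c Cc; apply: contrapT => nZc; apply: CZ; exists c.
have [|Z [lZ [y fZ]]] := ec _ f cf.
  by move=> lX; have [a _ []] := outside _ _ lX AD nA.
have [a Aa nZa] := outside _ _ lZ AD nA; have [b Bb nZb] := outside _ _ lZ BD nB.
have fay : f a = y by have : [set y] (f a) by rewrite -fZ; exists a.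
have fby : f b = y by have : [set y] (f b) by rewrite -fZ; exists b.
by apply: Raxioms.R1_neq_R0; rewrite -(fB b Bb) -(fA a Aa) fay fby.
Qed.

Lemma normal_real_separated (X : topologicalType) (A B : set X) :
  normal_space X -> closed A -> closed B -> A `&` B = set0 -> real_separated A B.
Proof.
move=> nX cA cB AB0.
have /(@uniform_separatorP _ R) [f [cf _ fA fB]] :=
  (@normal_separatorP R X).1 nX A B cA cB AB0.
by exists f; split=> // [a Aa|b Bb]; [apply: fA; exists a|apply: fB; exists b].
Qed.

Lemma continuous_near_eq (T U : topologicalType) (f h : T -> U) (p : T) :
  {for p, continuous h} -> {near p, f =1 h} -> {for p, continuous f}.
Proof.
move=> ch fh; have hf : {near p, h =1 f} by apply: filterS fh => x ->.
apply: cvg_trans (near_eq_cvg hf) _.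
by rewrite -(nbhs_singleton hf).
Qed.

Lemma discrete_family_unique (X : topologicalType) (D : set X) (U : X -> set X)
    (a b x : X) :
  discrete_family D U -> D a -> D b -> U a x -> U b x -> a = b.
Proof.
by move=> dU Da Db Uax Ubx; have [V [_ Vx]] := dU x; apply=> //; exists x.
Qed.

Section discrete_gluing.
Variables (X : topologicalType) (A : set X) (U : X -> set X) (g : X -> X -> R).
Hypothesis discrete_U : discrete_family A U.
Hypothesis continuous_g : forall a, A a -> continuous (g a).
Hypothesis g_out : forall a x, A a -> ~ U a x -> g a x = 1%R.

Definition glue (x : X) : R :=
  if pselect (exists a, A a /\ U a x) is left e then g (sval (cid e)) x
  else 1%R.

Lemma glue_in a x : A a -> U a x -> glue x = g a x.
Proof.
move=> Aa Uax; rewrite /glue; case: pselect => [e|]; last by case; exists a.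
case: (cid e) => b [Ab Ubx] /=.
by rewrite (discrete_family_unique discrete_U Ab Aa Ubx Uax).
Qed.

Lemma glue_out x : (forall a, A a -> ~ U a x) -> glue x = 1%R.
Proof.
by move=> nU; rewrite /glue; case: pselect => // -[a [Aa Uax]]; case: (nU a Aa).
Qed.

Lemma glue_continuous : continuous glue.
Proof.
move=> p; have [V [oV Vp VU]] := discrete_U p.
have nbhsV : nbhs p V := open_nbhs_nbhs (conj oV Vp).
have [[a Aa [y [Vy Uay]]]|noA] := pselect (exists2 a, A a & V `&` U a !=set0).
  apply: (continuous_near_eq (h := g a)); first exact: continuous_g.
  apply: filterS nbhsV => x Vx.
  have [Uax|nUax] := pselect (U a x); first by rewrite (glue_in Aa Uax).
  rewrite g_out // glue_out // => b Ab Ubx; apply: nUax.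
  by rewrite -(VU b a) //; [exists x|exists y].
apply: (continuous_near_eq (h := cst 1%R)); first exact: cst_continuous.
apply: filterS nbhsV => x Vx; rewrite glue_out // => a Aa Uax.
by apply: noA; exists a => //; exists x.
Qed.

End discrete_gluing.

Lemma discrete_family_real_separated (X : topologicalType) (D A B : set X)
    (U : X -> set X) :
  completely_regular (X := X) ->
  (forall a, D a -> open (U a)) -> (forall a, D a -> U a a) -> discrete_family D U ->
  A `<=` D -> B `<=` D -> A `&` B = set0 ->
  real_separated A B.
Proof.
move=> creg oU Uaa dU AD BD AB0.
have /choice[g gP] : forall a, exists ga : X -> R, A a ->
    [/\ continuous ga, ga a = 0%R & forall x, ~ U a x -> ga x = 1%R].
  move=> a; have [Aa|nAa] := pselect (A a); last by exists (fun=> 0%R).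
  have [f [cf fa f1]] := creg a (~` U a) (open_closedC (oU a (AD a Aa)))
    (fun nUa => nUa (Uaa a (AD a Aa))).
  by exists f.
have dUA : discrete_family A U.
  move=> p; have [V [oV Vp VU]] := dU p; exists V; split=> // a b Aa Ab.
  exact: VU (AD a Aa) (AD b Ab).
have cg a : A a -> continuous (g a) by case/gP.
have g1 a x : A a -> ~ U a x -> g a x = 1%R by move=> /gP[_ _]; apply.
exists (glue A U g); split.
- exact: glue_continuous dUA cg g1.
- by move=> a Aa; rewrite (glue_in g dUA Aa (Uaa a (AD a Aa))); case: (gP a Aa).
- move=> b Bb; apply: (glue_out g) => a Aa Uab.
  have ab : a = b :=
    discrete_family_unique dU (AD a Aa) (BD b Bb) Uab (Uaa b (BD b Bb)).
  have : (A `&` B) b by split=> //; rewrite -ab.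
  by rewrite AB0.
Qed.

Section strict_well_order.
Variable T : Type.
Implicit Types (D S : set T) (r : T -> T -> Prop).

Definition strict_well_order D r : Prop :=
  [/\ forall x, D x -> ~ r x x,
      forall x y z, D x -> D y -> D z -> r x y -> r y z -> r x z,
      forall x y, D x -> D y -> [\/ r x y, x = y | r y x] &
      forall A, A `<=` D -> A !=set0 -> exists2 m, A m & forall y, A y -> ~ r y m].

Lemma strict_well_order_sub D S r :
  S `<=` D -> strict_well_order D r -> strict_well_order S r.
Proof.
move=> SD [irr tr tri mn]; split=> [x /SD|x y z /SD + /SD + /SD|x y /SD + /SD|A AS].
- exact: irr.
- exact: tr.
- exact: tri.
- by apply: mn => x /AS /SD.
Qed.

End strict_well_order.

Lemma exists_strict_well_order (T : eqType) :
  exists r : T -> T -> Prop, strict_well_order setT r.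
Proof.
have [R woR] := wochoice.well_ordering_principle T.
have woT : wochoice.wo_chain R predT by apply: wochoice.withinW.
have Rtot := wochoice.wo_chainW woT.
have Ranti x y : R x y -> R y x -> x = y.
  move=> Rxy Ryx.
  by apply: wochoice.wo_chain_antisymmetric woT _ _ _ _ _; rewrite ?Rxy.
have Rtr x y z : R x y -> R y z -> R x z.
  move=> Rxy Ryz; have [|m [[m_xyz lbm] _]] := woR [mem [:: x; y; z]].
    by exists x; apply: mem_head.
  move: m_xyz lbm; rewrite !inE => /or3P[/eqP->|/eqP->|/eqP->] lbm.
  - by apply: lbm; rewrite !inE eqxx !orbT.
  - by rewrite (Ranti x y Rxy (lbm x _)) // inE eqxx.
  - by rewrite -(Ranti y z Ryz (lbm y _)) // !inE eqxx !orbT.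
have Rmin A : A !=set0 -> exists2 m, A m & forall y, A y -> R m y.
  move=> [x Ax]; have [|m [[/asboolP Am lbm] _]] := woR [pred y | `[< A y >]].
    by exists x; apply/asboolP.
  by exists m => // y Ay; apply: lbm; apply/asboolP.
exists (fun x y => R x y /\ x <> y); split.
- by move=> x _ [].
- move=> x y z _ _ _ [Rxy nxy] [Ryz nyz]; split; first exact: Rtr Rxy Ryz.
  by move=> xz; subst z; apply: nxy; apply: Ranti.
- move=> x y _ _; have [->|nxy] := pselect (x = y); first by constructor 2.
  have /orP[Rxy|Ryx] := Rtot x y isT isT; [constructor 1|constructor 3].
  + by split.
  + by split=> // /esym.
- move=> A _ /Rmin[m Am lbm]; exists m => // y Ay [Rym nym].
  exact/nym/Ranti/lbm.
Qed.

Lemma uncountable_aleph1_subset (X : topologicalType) (D : set X) :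
  ~ countable D ->
  exists D' : set X, [/\ D' `<=` D, ~ countable D' & card_le_aleph1 D'].
Proof.
move=> nD; have [r r_wo] := exists_strict_well_order X.
have [_ _ _ r_min] := r_wo.
pose D' := [set x | D x /\ countable [set y | D y /\ r y x]].
have D'D : D' `<=` D by move=> x [].
have nD' : ~ countable D'.
  move=> cD'; have [|m [Dm nD'm] m_min] := r_min (D `\` D') (@subsetT _ _).
    apply/set0P/negP => /eqP; rewrite setD_eq0 => DD'.
    exact/nD/(sub_countable (subset_card_le DD')).
  apply: nD'm; split=> //; apply: sub_countable (subset_card_le _) cD'.
  by move=> y [Dy rym]; apply: contrapT => nD'y; exact: m_min y (conj Dy nD'y) rym.
exists D'; split=> //; exists r.
have [irr tr tri mn] := strict_well_order_sub (@subsetT _ D') r_wo.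
split=> // x [Dx cx]; apply: sub_countable (subset_card_le _) cx.
by move=> y [[Dy _] ryx].
Qed.

Theorem theorem3p4 (X : topologicalType) :
  hausdorff_space X ->
  EC X R ->
  (@normal_space X \/
   (completely_regular (X := X) /\ aleph1_strongly_cwH (X := X))) ->
  omega1_compact (X := X).
Proof.
move=> _ ec sep D cdD; apply: contrapT => nD.
case: sep => [nX|[creg cwH]].
  have [A [B [AD BD AB0 nA nB]]] := uncountable_halves nD.
  apply: (EC_uncountable_not_separated ec cdD AD BD nA nB).
  apply: normal_real_separated AB0 => //.
    exact: (closed_discrete_sub cdD AD).1.
  exact: (closed_discrete_sub cdD BD).1.
have [D' [D'D nD' aleph1D']] := uncountable_aleph1_subset nD.
have cdD' := closed_discrete_sub cdD D'D.
have [U [oU Uaa dU]] := cwH D' cdD' aleph1D'.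
have [A [B [AD BD AB0 nA nB]]] := uncountable_halves nD'.
apply: (EC_uncountable_not_separated ec cdD' AD BD nA nB).
exact: discrete_family_real_separated creg oU Uaa dU AD BD AB0.
Qed.
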